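(* For sequences $(r_n)_{n\in\mathbb Z},(r'_n)_{n\in\mathbb Z}$ with $0<r_n,r'_n<1$ and $(\theta_n)_{n\in\mathbb Z},(\theta'_n)_{n\in\mathbb Z}$ with $\theta_n,\theta'_n\in[0,2\pi)$ and $\theta_0=\theta_1=\theta'_0=\theta'_1=0$, define \[ U_{r,\theta}=\sum_{n\in\mathbb Z}|e_1^{n-1}\rangle\langle r_ne_1^n+e^{i\theta_n}s_ne_2^n|+|e_2^{n+1}\rangle\langle -e^{-i\theta_n}s_ne_1^n+r_ne_2^n|,\quad s_n=\sqrt{1-r_n^2}, \] and $U_{r',\theta'}$ analogously. Then $U_{r,\theta}$ and $U_{r',\theta'}$ are unitary equivalent if and only if $r=r'$ and $\theta=\theta'$.
   Context: Let $\mathcal H_n=\mathbb C^2$ for $n\in\mathbb Z$, $\mathcal H=\bigoplus_{n\in\mathbb Z}\mathcal H_n$, and $\{e_1^n,e_2^n\}$ the standard basis of $\mathcal H_n$. Dirac notation: $|x\rangle\langle y|$ is the operator $z\mapsto\langle y,z\rangle x$ (inner product conjugate-linear in the first argument). Since a unitary $U$ and $e^{i\lambda}U$ are identified, two unitaries $U_1,U_2$ on $\mathcal H$ are called unitary equivalent if there exist $\lambda\in\mathbb R$ and a unitary $W=\bigoplus_{n\in\mathbb Z}W_n$ (each $W_n$ a unitary on $\mathcal H_n$) with $e^{i\lambda}WU_1W^*=U_2$. *)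

From mathcomp Require Import all_boot all_order all_algebra.
From mathcomp Require Import reals trigo.
From mathcomp.real_closed Require Import complex.
Import GRing.Theory Num.Theory.
Local Open Scope ring_scope.
Local Open Scope complex_scope.

(* Conventions: the Hilbert space H = (+)_{n in Z} C^2 is not built as an
   l^2 space; a (bounded) operator T on H is represented by its block matrix
   T m n : 'M_2, with (T m n) i j = < e_i^m , T e_j^n >  (i,j in {1,2}
   encoded as 0,1). *)

Section Defs.
Variable R : realType.

Definition expi (t : R) : R[i] := (cos t +i* sin t).

Definition adjmx {m n : nat} (A : 'M[R[i]]_(m, n)) : 'M[R[i]]_(n, m) :=
  (map_mx (@conjc R) A)^T.

Definition unitary2 (W : 'M[R[i]]_2) : Prop :=
  W *m adjmx W = 1%:M /\ adjmx W *m W = 1%:M.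

Definition cvec (a b : R[i]) : 'cV[R[i]]_2 :=
  \col_(i < 2) (if i == ord0 then a else b).
Definition e1 : 'cV[R[i]]_2 := cvec 1 0.
Definition e2 : 'cV[R[i]]_2 := cvec 0 1.

(* block (m,n) of the operator |x><y| where x in H_a, y in H_b;
   <y, z> is conjugate-linear in y, so the block is x y^*. *)
Definition ketbra (a b : int) (x y : 'cV[R[i]]_2) (m n : int) : 'M[R[i]]_2 :=
  if (m == a) && (n == b) then x *m adjmx y else 0.

Definition sn (r : int -> R) (n : int) : R := Num.sqrt (1 - r n ^+ 2).

(* The k-th summand of U_{r,theta} is
     |e_1^{k-1}><r_k e_1^k + e^{i th_k} s_k e_2^k|
   + |e_2^{k+1}><-e^{-i th_k} s_k e_1^k + r_k e_2^k| ;
   its blocks vanish outside column k, so block (m,n) of the (strongly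
   convergent) sum is the block (m,n) of the n-th summand. *)
Definition Uop (r th : int -> R) (m n : int) : 'M[R[i]]_2 :=
  ketbra (n - 1) n e1 (cvec (r n)%:C (expi (th n) * (sn r n)%:C)) m n
  + ketbra (n + 1) n e2 (cvec (- (expi (- th n) * (sn r n)%:C)) (r n)%:C) m n.

(* U1, U2 unitarily equivalent: exists lam and W = (+)_n W_n (W_n unitary)
   with e^{i lam} W U1 W^* = U2; block (m,n) of W U1 W^* is W_m U1_{mn} W_n^*. *)
Definition unit_equiv (U1 U2 : int -> int -> 'M[R[i]]_2) : Prop :=
  exists (lam : R) (W : int -> 'M[R[i]]_2),
    (forall n, unitary2 (W n)) /\
    forall m n : int, expi lam *: (W m *m U1 m n *m adjmx (W n)) = U2 m n.

End Defs.
Arguments Uop {R} r th m n.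
Arguments unit_equiv {R} U1 U2.

From mathcomp Require Import all_boot all_order all_algebra.
From mathcomp Require Import reals trigo.
From mathcomp.real_closed Require Import complex.
From mathcomp Require Import zify ring lra.
Import Order.TTheory GRing.Theory Num.Theory.
Local Open Scope ring_scope.
Local Open Scope complex_scope.

(* Write c = e^{i lam}.  Since W_n^* W_n = 1, the equivalence says
   c W_m U_{mn} = U'_{mn} W_n.  The blocks U_{n-1,n} = |e_1><y_n| and
   U_{n+1,n} = |e_2><z_n| have the nonzero coefficient r in the entries
   <e_1,y_n> and <e_2,z_n>, which forces every W_n to be diagonal, say
   W_n = diag(a_n, b_n) with |a_n| = |b_n| = 1.  The remaining entries read
   c a_n r_{n+1} = r'_{n+1} a_{n+1},  c b_{n+1} r_n = r'_n b_n  and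
   c b_{n+1} e^{i th_n} s_n = e^{i th'_n} s'_n a_n.
   Taking moduli in the first gives r = r', after which a_{n+1} = c a_n and
   b_n = c b_{n+1}, so q_n = b_n / a_n satisfies q_n e^{i th_n} = e^{i th'_n}
   and q_{n+1} c^2 = q_n.  The normalisation of th and th' at 0 and 1 gives
   q_0 = q_1 = 1, hence c^2 = 1, q = 1 and e^{i th} = e^{i th'}; finally
   t |-> e^{i t} is injective on [0, 2 pi). *)

Local Notation i0 := (@Ordinal 2 0 isT).
Local Notation i1 := (@Ordinal 2 1 isT).

Lemma int_succ_const (T : Type) (f : int -> T) :
  (forall m, f (m + 1) = f m) -> forall m, f m = f 0.
Proof.
move=> fS; elim/int_rect=> [//|n IHn|n IHn].
  by rewrite -IHn -(fS n); congr f; lia.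
by rewrite -IHn -(fS (- n.+1%:Z)); congr f; lia.
Qed.

Section Trigonometry.
Context {R : realType}.

Lemma sin_eq0_Npipi (x : R) : - pi < x < pi -> sin x = 0 -> x = 0.
Proof.
move=> /andP[piNx xpi] sinx0; case: (ltrgtP x 0) => // [x_lt0|x_gt0].
- have : 0 < sin (- x) by apply: sin_gt0_pi; rewrite oppr_gt0 x_lt0 ltrNl.
  by rewrite sinN sinx0 oppr0 ltxx.
- have : 0 < sin x by apply: sin_gt0_pi; rewrite x_gt0.
  by rewrite sinx0 ltxx.
Qed.

Lemma cos_eq1_N2pi2pi (x : R) : - (2 * pi) < x < 2 * pi -> cos x = 1 -> x = 0.
Proof.
move=> /andP[pi2Nx xpi2] cosx1; set h := x / 2.
have xE : x = h *+ 2 by rewrite /h -mulr_natr divfK ?pnatr_eq0.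
have cosh2 : cos h ^+ 2 = 1.
  by move: cosx1; rewrite xE cos_mulr2n; lra.
have sinh0 : sin h = 0 by apply/eqP; rewrite -sqrf_eq0 sin2cos2 cosh2 subrr.
have pi_gt0 := @pi_gt0 R.
rewrite xE (@sin_eq0_Npipi h) ?mul0rn //.
by apply/andP; split; rewrite /h; [rewrite ltr_pdivlMr | rewrite ltr_pdivrMr]; lra.
Qed.

Lemma expi0 : expi R 0 = 1.
Proof. by rewrite /expi cos0 sin0. Qed.

Lemma conj_expi (t : R) : (expi R t)^*%C = expi R (- t).
Proof. by rewrite /expi cosN sinN. Qed.

Lemma norm_expi (t : R) : `|expi R t| = 1.
Proof.
apply/eqP; rewrite -sqrp_eq1 // sqr_normc conj_expi /expi cosN sinN.
by simpc; rewrite -!expr2 cos2Dsin2 mulrC addNr.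
Qed.

Lemma expi_inj_02pi (t t' : R) : 0 <= t < 2 * pi -> 0 <= t' < 2 * pi ->
  expi R t = expi R t' -> t = t'.
Proof.
move=> /andP[t_ge0 t_lt] /andP[t'_ge0 t'_lt] [cost sint].
apply/eqP; rewrite -subr_eq0; apply/eqP/cos_eq1_N2pi2pi; first lra.
by rewrite cosB cost sint -!expr2 cos2Dsin2.
Qed.

End Trigonometry.

Lemma is_diag_mxE (K : nmodType) n (A : 'M[K]_n) :
  is_diag_mx A -> A = diag_mx (\row_i A i i).
Proof.
move=> /is_diag_mxP Adiag; apply/matrixP => i j; rewrite !mxE.
by case: (altP (i =P j)) => [->|/Adiag->]; rewrite ?mulr1n ?mulr0n.
Qed.

Lemma mul_is_diag_mxE (K : pzSemiRingType) n k (A : 'M[K]_n) (B : 'M[K]_(n, k)) i j :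
  is_diag_mx A -> (A *m B) i j = A i i * B i j.
Proof. by move=> /is_diag_mxE {1}->; rewrite mul_diag_mx !mxE. Qed.

Lemma mul_mx_is_diagE (K : pzSemiRingType) n k (A : 'M[K]_(k, n)) (B : 'M[K]_n) i j :
  is_diag_mx B -> (A *m B) i j = A i j * B j j.
Proof. by move=> /is_diag_mxE {1}->; rewrite mul_mx_diag !mxE. Qed.

Lemma ord2P (i : 'I_2) : i = i0 \/ i = i1.
Proof. by case: i => [[|[|//]] ?]; [left|right]; apply: val_inj. Qed.

Lemma mulmx2E (K : pzSemiRingType) (A B : 'M[K]_2) i j :
  (A *m B) i j = A i i0 * B i0 j + A i i1 * B i1 j.
Proof.
rewrite mxE !big_ord_recl big_ord0 addr0.
by congr (A i _ * B _ j + A i _ * B _ j); apply: val_inj.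
Qed.

Lemma is_diag_mx2 (K : nmodType) (A : 'M[K]_2) :
  A i0 i1 = 0 -> A i1 i0 = 0 -> is_diag_mx A.
Proof.
move=> A01 A10; apply/is_diag_mxP => i j.
by case: (ord2P i) => ->; case: (ord2P j) => ->.
Qed.

Section Matrices.
Context {R : realType}.
Local Notation C := R[i].

Lemma mul_adjmxE m n (x : 'cV[C]_m) (y : 'cV[C]_n) i j :
  (x *m adjmx R y) i j = x i 0 * (y j 0)^*%C.
Proof. by rewrite mxE big_ord1 !mxE. Qed.

Lemma unitary2_diag_norm (W : 'M[C]_2) i :
  unitary2 R W -> is_diag_mx W -> `|W i i| = 1.
Proof.
move=> [W_unit _] W_diag; apply/eqP; rewrite -sqrp_eq1 // sqr_normc.
have := congr1 (fun M : 'M[C]_2 => M i i) W_unit.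
by rewrite /= mul_is_diag_mxE // !mxE eqxx => ->.
Qed.

Lemma unitary2_intertwine {c : C} {A B U U' : 'M[C]_2} :
  adjmx R B *m B = 1%:M -> c *: (A *m U *m adjmx R B) = U' ->
  c *: (A *m U) = U' *m B.
Proof. by move=> BK <-; rewrite -scalemxAl -mulmxA BK mulmx1. Qed.

Lemma unit_equiv_refl (U : int -> int -> 'M[C]_2) : unit_equiv U U.
Proof.
have adj1 : adjmx R 1%:M = 1%:M :> 'M[C]_2.
  by rewrite /adjmx map_scalar_mx tr_scalar_mx rmorph1.
exists 0, (fun _ => 1%:M); split=> [n|m n].
  by rewrite /unitary2 adj1 mulmx1.
by rewrite expi0 scale1r mul1mx adj1 mulmx1.
Qed.

End Matrices.

Section WalkOperator.
Context {R : realType} (r th : int -> R).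

Lemma Uop_superdiag m : Uop r th m (m + 1) =
  e1 R *m adjmx R (cvec R (r (m + 1))%:C (expi R (th (m + 1)) * (sn R r (m + 1))%:C)).
Proof.
rewrite /Uop /ketbra addrK !eqxx /=.
have /negPf-> : m != m + 1 + 1 by apply/eqP => E; lia.
by rewrite addr0.
Qed.

Lemma Uop_subdiag m : Uop r th (m + 1) m =
  e2 R *m adjmx R (cvec R (- (expi R (- th m) * (sn R r m)%:C)) (r m)%:C).
Proof.
rewrite /Uop /ketbra !eqxx andbT /=.
have /negPf-> : m + 1 != m - 1 by apply/eqP => E; lia.
by rewrite add0r.
Qed.

Lemma Uop_superdiag00 m : Uop r th m (m + 1) i0 i0 = (r (m + 1))%:C.
Proof. by rewrite Uop_superdiag mul_adjmxE !mxE mul1r conjc_real. Qed.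

Lemma Uop_superdiag1 m j : Uop r th m (m + 1) i1 j = 0.
Proof. by rewrite Uop_superdiag mul_adjmxE !mxE mul0r. Qed.

Lemma Uop_subdiag0 m j : Uop r th (m + 1) m i0 j = 0.
Proof. by rewrite Uop_subdiag mul_adjmxE !mxE mul0r. Qed.

Lemma Uop_subdiag11 m : Uop r th (m + 1) m i1 i1 = (r m)%:C.
Proof. by rewrite Uop_subdiag mul_adjmxE !mxE mul1r conjc_real. Qed.

Lemma Uop_subdiag10 m : Uop r th (m + 1) m i1 i0 = - (expi R (th m) * (sn R r m)%:C).
Proof.
by rewrite Uop_subdiag mul_adjmxE !mxE mul1r /expi cosN sinN; simpc.
Qed.

Lemma sn_gt0 n : `|r n| < 1 -> 0 < sn R r n.
Proof. by move=> r_lt1; rewrite sqrtr_gt0 subr_gt0 -real_normK ?num_real // expr_lt1. Qed.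

End WalkOperator.

Section Intertwiner.
Context {R : realType} {r th r' th' : int -> R} {c : R[i]} {W : int -> 'M[R[i]]_2}.
Hypotheses (r_gt0 : forall n, 0 < r n) (r'_gt0 : forall n, 0 < r' n).
Hypothesis r_lt1 : forall n, r n < 1.
Hypothesis W_unitary : forall n, unitary2 R (W n).
Hypothesis c_norm : `|c| = 1.
Hypothesis intertwine : forall m n, c *: (W m *m Uop r th m n) = Uop r' th' m n *m W n.

Let c_neq0 : c != 0. Proof. by rewrite -normr_eq0 c_norm oner_eq0. Qed.
Let rC_neq0 n : (r n)%:C != 0. Proof. by rewrite eq_complex /= eqxx andbT gt_eqF. Qed.

Let intertwine_entry m n i j :
  c * (W m *m Uop r th m n) i j = (Uop r' th' m n *m W n) i j.
Proof. by rewrite -(intertwine m n) [RHS]mxE. Qed.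

Lemma intertwiner_diag m : is_diag_mx (W m).
Proof.
apply: is_diag_mx2.
  rewrite -(subrK 1 m); have := intertwine_entry (m - 1 + 1) (m - 1) i0 i1.
  rewrite !mulmx2E !Uop_subdiag0 Uop_subdiag11 mulr0 !mul0r !add0r => /eqP.
  by rewrite !mulf_eq0 (negPf c_neq0) (negPf (rC_neq0 _)) orbF => /eqP.
have := intertwine_entry m (m + 1) i1 i0.
rewrite !mulmx2E !Uop_superdiag1 Uop_superdiag00 !mulr0 !mul0r !addr0 => /eqP.
by rewrite !mulf_eq0 (negPf c_neq0) (negPf (rC_neq0 _)) orbF => /eqP.
Qed.

Lemma intertwiner_diag_norm m i : `|W m i i| = 1.
Proof. exact/unitary2_diag_norm/intertwiner_diag. Qed.

Lemma intertwiner_diagE m n i j :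
  c * W m i i * Uop r th m n i j = Uop r' th' m n i j * W n j j.
Proof.
have := intertwine_entry m n i j.
by rewrite mul_is_diag_mxE ?mul_mx_is_diagE ?intertwiner_diag // mulrA.
Qed.

Lemma intertwiner_r_eq : r = r'.
Proof.
apply: boolp.funext => n; rewrite -(subrK 1 n).
have := intertwiner_diagE (n - 1) (n - 1 + 1) i0 i0.
rewrite !Uop_superdiag00 => /(congr1 Num.norm).
rewrite !normrM c_norm !intertwiner_diag_norm !mul1r mulr1.
by rewrite !ger0_norm ?ler0c ?ltW // => -[].
Qed.

Lemma intertwiner_succ00 m : W (m + 1) i0 i0 = c * W m i0 i0.
Proof.
have := intertwiner_diagE m (m + 1) i0 i0.
by rewrite !Uop_superdiag00 -intertwiner_r_eq [RHS]mulrC => /(mulIf (rC_neq0 _)).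
Qed.

Lemma intertwiner_succ11 m : W m i1 i1 = c * W (m + 1) i1 i1.
Proof.
have := intertwiner_diagE (m + 1) m i1 i1.
by rewrite !Uop_subdiag11 -intertwiner_r_eq [RHS]mulrC => /(mulIf (rC_neq0 _)).
Qed.

Lemma intertwiner_phase m : W m i1 i1 * expi R (th m) = expi R (th' m) * W m i0 i0.
Proof.
have sC_neq0 : (sn R r m)%:C != 0.
  by rewrite eq_complex /= eqxx andbT gt_eqF // sn_gt0 // gtr0_norm.
have := intertwiner_diagE (m + 1) m i1 i0.
rewrite !Uop_subdiag10 -intertwiner_r_eq mulrN mulNr => /oppr_inj.
rewrite -(intertwiner_succ11 m) => phase_s.
by apply: (mulIf sC_neq0); rewrite -mulrA phase_s mulrAC.
Qed.

Lemma intertwiner_expi_eq : th 0 = 0 -> th 1 = 0 -> th' 0 = 0 -> th' 1 = 0 ->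
  forall m, expi R (th m) = expi R (th' m).
Proof.
move=> th0 th1 th'0 th'1 m.
have a_neq0 k : W k i0 i0 != 0 by rewrite -normr_eq0 intertwiner_diag_norm oner_eq0.
pose q k := W k i1 i1 / W k i0 i0.
have q_phase k : q k * expi R (th k) = expi R (th' k).
  by rewrite /q mulrAC intertwiner_phase mulfK.
have q_succ k : q (k + 1) * c ^+ 2 = q k.
  by rewrite /q intertwiner_succ00 (intertwiner_succ11 k); field; rewrite a_neq0 c_neq0.
have q0 : q 0 = 1 by have := q_phase 0; rewrite th0 th'0 expi0 mulr1.
have q1 : q 1 = 1 by have := q_phase 1; rewrite th1 th'1 expi0 mulr1.
have c2 : c ^+ 2 = 1 by have := q_succ 0; rewrite add0r q0 q1 mul1r.
have qm : q m = 1 by rewrite (@int_succ_const _ q) // => k; rewrite -[RHS]q_succ c2 mulr1.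
by rewrite -(q_phase m) qm mul1r.
Qed.

End Intertwiner.

Theorem theorem2p5 (R : realType) (r r' th th' : int -> R) :
  (forall n, 0 < r n < 1) -> (forall n, 0 < r' n < 1) ->
  (forall n, 0 <= th n < 2 * pi) -> (forall n, 0 <= th' n < 2 * pi) ->
  th 0 = 0 -> th 1 = 0 -> th' 0 = 0 -> th' 1 = 0 ->
  (unit_equiv (Uop r th) (Uop r' th') <-> (r = r' /\ th = th')).
Proof.
move=> r_bd r'_bd th_bd th'_bd th0 th1 th'0 th'1.
split=> [[lam [W [W_unitary equiv]]]|[<- <-]]; last exact: unit_equiv_refl.
have intertwine m n := unitary2_intertwine (proj2 (W_unitary n)) (equiv m n).
have r_gt0 n : 0 < r n by case/andP: (r_bd n).
have r'_gt0 n : 0 < r' n by case/andP: (r'_bd n).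
have r_lt1 n : r n < 1 by case/andP: (r_bd n).
have rr' := intertwiner_r_eq r_gt0 r'_gt0 W_unitary (norm_expi lam) intertwine.
split=> //; apply: boolp.funext => m; apply: expi_inj_02pi => //.
exact: (intertwiner_expi_eq r_gt0 r'_gt0 r_lt1 W_unitary (norm_expi lam) intertwine).
Qed.
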